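(* Let $\beta>0$, $\rho\ge0$, and let $A^C_\mu$, $A^A_\mu$ be the Harrington–Shepard SU(2) caloron and anticaloron (with the same $\beta,\rho$, centered at the origin with zero temporal phase). For $\alpha\in\{C,A\}$ and $a\in\{1,2,3\}$ define $$I^a_\alpha(\tau,\vec x)=\mathrm{tr}\Big(t^a\,F^\alpha_{\mu\nu}(\tau,\vec 0)\,\{(\tau,\vec 0),(\tau,\vec x)\}_\alpha\,F^\alpha_{\mu\nu}(\tau,\vec x)\,\{(\tau,\vec x),(\tau,\vec 0)\}_\alpha\Big)$$ (summed over $\mu,\nu$). Then, wherever these expressions are defined, $I^a_A(\tau,\vec x)=I^a_C(\tau,-\vec x)$ for all $a$; i.e. the anticaloron integrand is obtained from the caloron integrand by the parity transformation $\vec x\to-\vec x$.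
   Context: Gauge group SU(2), $t_a=\frac12\sigma_a$ (Pauli matrices), summation over repeated indices, Euclidean coordinates $x_4=\tau$, $\mu,\nu\in\{1,2,3,4\}$. 't Hooft symbols: $\eta^a_{\mu\nu}=\epsilon^a_{\mu\nu}+\delta^a_\mu\delta_{\nu4}-\delta^a_\nu\delta_{\mu4}$, $\bar\eta^a_{\mu\nu}=\epsilon^a_{\mu\nu}-\delta^a_\mu\delta_{\nu4}+\delta^a_\nu\delta_{\mu4}$, where $\epsilon^a_{\mu\nu}=\epsilon_{a\mu\nu}$ for $\mu,\nu\in\{1,2,3\}$ and $0$ otherwise. Prepotential $\Pi(\tau,r)=1+\frac{\pi\rho^2}{\beta r}\frac{\sinh(2\pi r/\beta)}{\cosh(2\pi r/\beta)-\cos(2\pi\tau/\beta)}$, $r=|\vec x|$. Caloron $A^C_\mu=\bar\eta^a_{\mu\nu}t_a\partial_\nu\ln\Pi$, anticaloron $A^A_\mu=\eta^a_{\mu\nu}t_a\partial_\nu\ln\Pi$. Field strength $F_{\mu\nu}=\partial_\mu A_\nu-\partial_\nu A_\mu-i[A_\mu,A_\nu]$. The Wilson line $\{(\tau,\vec y),(\tau,\vec z)\}_\alpha$ is the path-ordered exponential $\mathcal P\exp[i\int dz_\mu A^\alpha_\mu]$ along the straight segment from $(\tau,\vec y)$ to $(\tau,\vec z)$. *)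

From mathcomp Require Import all_boot all_order all_algebra.
From mathcomp Require Import all_classical all_reals all_analysis.
From mathcomp Require Import complex.
Set Implicit Arguments. Unset Strict Implicit. Unset Printing Implicit Defensive.
Import Order.TTheory GRing.Theory Num.Theory.
Local Open Scope ring_scope.
Local Open Scope complex_scope.

(* Euclidean points x = (x_1,x_2,x_3,x_4) are row vectors 'rV[R]_4;
   index k : 'I_4 stands for mu = k+1, so index 3 is x_4 = tau.
   Colour index a : 'I_3 stands for a = 1,2,3. *)

Definition pt (R : realType) (tau : R) (x : 'rV[R]_3) : 'rV[R]_4 :=
  \row_(i < 4) (if (i < 3)%N as b return R then x 0 (inord i) else tau).

Definition evec (R : realType) (nu : 'I_4) : 'rV[R]_4 := delta_mx 0 nu.
Definition partial (R : realType) (nu : 'I_4) (f : 'rV[R]_4 -> R) (x : 'rV[R]_4) : R :=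
  'D_(evec R nu) f x.

Definition sinh (R : realType) (y : R) : R := (expR y - expR (- y)) / 2.
Definition cosh (R : realType) (y : R) : R := (expR y + expR (- y)) / 2.

Definition leviCivita (R : realType) (a b c : nat) : R :=
  if [|| (a, b, c) == (0, 1, 2)%N, (a, b, c) == (1, 2, 0)%N | (a, b, c) == (2, 0, 1)%N]
  then 1
  else if [|| (a, b, c) == (0, 2, 1)%N, (a, b, c) == (2, 1, 0)%N | (a, b, c) == (1, 0, 2)%N]
  then -1 else 0.

Definition kdelta (R : realType) (m n : nat) : R := if m == n then 1 else 0.

Definition epsS (R : realType) (a : 'I_3) (mu nu : 'I_4) : R :=
  if ((mu < 3) && (nu < 3))%N then leviCivita R a mu nu else 0.

Definition eta (R : realType) (a : 'I_3) (mu nu : 'I_4) : R :=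
  epsS R a mu nu + kdelta R a mu * kdelta R nu 3 - kdelta R a nu * kdelta R mu 3.
Definition etabar (R : realType) (a : 'I_3) (mu nu : 'I_4) : R :=
  epsS R a mu nu - kdelta R a mu * kdelta R nu 3 + kdelta R a nu * kdelta R mu 3.

Definition rad (R : realType) (x : 'rV[R]_4) : R :=
  Num.sqrt (x 0 0 ^+ 2 + x 0 1 ^+ 2 + x 0 2 ^+ 2).
Definition tim (R : realType) (x : 'rV[R]_4) : R := x 0 3.

(* Harrington-Shepard prepotential; at r = 0 it is given by its (smooth) limit
   r -> 0, 1 + 2 pi^2 rho^2 / (beta^2 (1 - cos(2 pi tau/beta))) *)
Definition Pi (R : realType) (beta rho : R) (x : 'rV[R]_4) : R :=
  let r := rad x in let tau := tim x in
  if r == 0 then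
    1 + 2 * pi ^+ 2 * rho ^+ 2 / (beta ^+ 2 * (1 - cos (2 * pi * tau / beta)))
  else
    1 + pi * rho ^+ 2 / (beta * r) *
        (sinh (2 * pi * r / beta) / (cosh (2 * pi * r / beta) - cos (2 * pi * tau / beta))).

(* real colour components A^a_mu = (eta or etabar)^a_{mu nu} d_nu ln Pi;
   anti = false : caloron (etabar), anti = true : anticaloron (eta) *)
Definition thooft (R : realType) (anti : bool) : 'I_3 -> 'I_4 -> 'I_4 -> R :=
  if anti then eta R else etabar R.
Definition Acomp (R : realType) (anti : bool) (beta rho : R) (a : 'I_3) (mu : 'I_4)
  (x : 'rV[R]_4) : R :=
  \sum_(nu < 4) thooft R anti a mu nu * partial nu (fun y => ln (Pi beta rho y)) x.

Definition imagC (R : realType) : R[i] := Complex 0 1.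
Definition pauli (R : realType) (a : 'I_3) : 'M[R[i]]_2 :=
  \matrix_(i < 2, j < 2)
    (if a == 0 :> nat then (if i == j then 0 else 1)
     else if a == 1 :> nat then
       (if i == j then 0 else if i == 0 :> nat then - imagC R else imagC R)
     else (if i == j then (if i == 0 :> nat then 1 else -1) else 0)).
Definition tgen (R : realType) (a : 'I_3) : 'M[R[i]]_2 := (2%:R)^-1 *: pauli R a.

Definition Agauge (R : realType) (anti : bool) (beta rho : R) (mu : 'I_4)
  (x : 'rV[R]_4) : 'M[R[i]]_2 :=
  \sum_(a < 3) (Acomp anti beta rho a mu x)%:C *: tgen R a.

(* field strength F_{mu nu} = d_mu A_nu - d_nu A_mu - i [A_mu, A_nu];
   since t_a are constant, d_mu A_nu = (d_mu A^a_nu) t_a *)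
Definition Fstrength (R : realType) (anti : bool) (beta rho : R) (mu nu : 'I_4)
  (x : 'rV[R]_4) : 'M[R[i]]_2 :=
  \sum_(a < 3) (partial mu (Acomp anti beta rho a nu) x
                - partial nu (Acomp anti beta rho a mu) x)%:C *: tgen R a
  - imagC R *: (Agauge anti beta rho mu x *m Agauge anti beta rho nu x
                - Agauge anti beta rho nu x *m Agauge anti beta rho mu x).

Definition has_mx_derive (R : realType) (W : R -> 'M[R[i]]_2) (s : R)
  (D : 'M[R[i]]_2) : Prop :=
  forall i j : 'I_2,
    is_derive s (1 : R) (fun u => complex.Re (W u i j)) (complex.Re (D i j)) /\
    is_derive s (1 : R) (fun u => complex.Im (W u i j)) (complex.Im (D i j)).

(* W solves the parallel-transport equation along the straight segment
   s |-> y + s (z - y), s in [0,1]:  W(0) = 1,  dW/ds = i (z-y)_mu A_mu(y + s(z-y)) W(s)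
   (path ordering: later points to the left).  The Wilson line
   {y, z} = P exp[i \int dz_mu A_mu] is then W(1). *)
Definition wilson_sol (R : realType) (anti : bool) (beta rho : R)
  (y z : 'rV[R]_4) (W : R -> 'M[R[i]]_2) : Prop :=
  W 0 = 1%:M /\
  forall s : R, 0 <= s <= 1 ->
    has_mx_derive W s
      ((imagC R *: \sum_(mu < 4) ((z - y) 0 mu)%:C *:
                      Agauge anti beta rho mu (y + s *: (z - y))) *m W s).

(* the integrand I^a(tau, x), with the two Wilson lines given as
   W1 : from (tau,0) to (tau,x) and W2 : from (tau,x) to (tau,0) *)
Definition Iintegrand (R : realType) (anti : bool) (beta rho tau : R) (x : 'rV[R]_3)
  (W1 W2 : R -> 'M[R[i]]_2) (a : 'I_3) : R[i] :=
  \tr (tgen R a *m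
        \sum_(mu < 4) \sum_(nu < 4)
           (Fstrength anti beta rho mu nu (pt tau 0) *m W1 1 *m
            Fstrength anti beta rho mu nu (pt tau x) *m W2 1)).

(* Write P(tau, x) = (tau, -x) and s_mu = -1 for spatial mu, s_4 = 1.  The
   prepotential is P-invariant and eta^a_{mu nu} s_nu = s_mu etabar^a_{mu nu}, so
   A^A_mu(y) = s_mu A^C_mu(P y) and F^A_{mu nu}(y) = s_mu s_nu F^C_{mu nu}(P y).
   Hence the transport equation of A^A along a segment is that of A^C along the
   reflected segment; its generator is anti-Hermitian, so the Frobenius norm of
   the difference of two solutions is constant and the Wilson lines coincide.
   In the integrand the factor s_mu s_nu occurs twice and squares to 1.
   No regularity of Pi is used: derivatives are limits that may be junk values,
   and the reflection identities hold for those as well. *)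

From Pilot Require Import Defs.
From mathcomp Require Import all_boot all_order all_algebra.
From mathcomp Require Import all_classical all_reals all_analysis.
From mathcomp Require Import complex.
From mathcomp Require Import ring lra.
Import Order.TTheory GRing.Theory Num.Theory.
Local Open Scope ring_scope.
Local Open Scope classical_set_scope.

Section DirectionalDerivative.
Variable R : realType.

Lemma near_dnbhs0N (P : set R) : 0^' P -> 0^' (fun h => P (- h)).
Proof.
move=> P0; have : (- (0 : R))^' P by rewrite oppr0.
by rewrite dnbhsN => -[A A0 <-]; apply: filterS A0 => h Ah; exists h.
Qed.

Lemma lim_dnbhs0_compN (W : normedModType R) (g : R -> W) :
  lim (g (- h) @[h --> 0^']) = lim (g @ 0^').
Proof.
congr lim; rewrite funeqE => P; rewrite propeqE.
split => /near_dnbhs0N //; apply: filterS => h /=; by rewrite opprK.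
Qed.

(* A divergent limit is [point], which is [0] in [R]; hence [f] is real-valued below. *)
Lemma lim_dnbhs0N (g : R -> R^o) : lim ((- g h) @[h --> 0^']) = - lim (g @ 0^').
Proof.
have [cg|dg] := pselect (cvg (g @ 0^')); first by rewrite limN.
have dNg : ~ cvg ((- g h) @[h --> 0^']) by rewrite is_cvgNE.
by rewrite (dvgP dg) (dvgP dNg) /= oppr0.
Qed.

Variables (V : normedModType R) (f : V -> R).

Lemma derive_oppf (x v : V) : 'D_v (fun y => - f y) x = - 'D_v f x.
Proof.
by rewrite /derive -lim_dnbhs0N; under eq_fun do rewrite /= -opprD scalerN.
Qed.

Lemma derive_oppv (x v : V) : 'D_(- v) f x = - 'D_v f x.
Proof.
rewrite /derive -lim_dnbhs0N -[in RHS]lim_dnbhs0_compN.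
by under eq_fun => h do rewrite -[h^-1]opprK -invrN scaleNr scalerN -[- (h *: v)]scaleNr.
Qed.

Lemma derive_signf (b : bool) (x v : V) :
  'D_v (fun y => (-1) ^+ b * f y) x = (-1) ^+ b * 'D_v f x.
Proof.
case: b; last by under eq_fun do rewrite expr0 mul1r; rewrite mul1r.
by under eq_fun do rewrite expr1 mulN1r; rewrite derive_oppf mulN1r.
Qed.

Lemma derive_signv (b : bool) (x v : V) :
  'D_((-1) ^+ b *: v) f x = (-1) ^+ b * 'D_v f x.
Proof. by case: b; rewrite ?expr0 ?expr1 ?scale1r ?mul1r ?scaleN1r ?mulN1r ?derive_oppv. Qed.

Lemma derive_comp_linear (U : normedModType R) (L : U -> V) (x v : U) :
  linear L -> 'D_v (f \o L) x = 'D_(L v) f (L x).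
Proof. by move=> linL; rewrite /derive /=; under eq_fun do rewrite linL. Qed.

End DirectionalDerivative.

Definition sgn (R : realType) (i : 'I_4) : R := (-1) ^+ (i < 3)%N.

Definition par (R : realType) (x : 'rV[R]_4) : 'rV[R]_4 := \row_i (sgn R i * x 0 i).
Arguments par {R} x.

Section Parity.
Variable R : realType.
Implicit Types (x : 'rV[R]_4) (beta rho : R).

Lemma sgn_mul_sqr (mu nu : 'I_4) : (sgn R mu * sgn R nu) ^+ 2 = 1.
Proof. by rewrite exprMn /sgn !sqrr_sign mulr1. Qed.

Lemma par_is_linear : linear (@par R).
Proof. by move=> k x y; apply/rowP => i; rewrite !mxE; ring. Qed.

Lemma par_evec (nu : 'I_4) : par (evec R nu) = sgn R nu *: evec R nu.
Proof. by apply/rowP => i; rewrite !mxE /=; case: eqP => [->|_]; rewrite ?mulr0. Qed.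

Lemma par_pt tau (v : 'rV[R]_3) : par (pt tau v) = pt tau (- v).
Proof. by apply/rowP => i; rewrite !mxE /sgn; case: ifP; rewrite ?mulN1r ?mul1r. Qed.

Lemma partial_comp_par (nu : 'I_4) (f : 'rV[R]_4 -> R) x :
  partial nu (f \o par) x = sgn R nu * partial nu f (par x).
Proof.
rewrite /partial derive_comp_linear; last exact: par_is_linear.
by rewrite par_evec derive_signv.
Qed.

Lemma rad_par x : Defs.rad (par x) = Defs.rad x.
Proof. by rewrite /Defs.rad !mxE /sgn /= !mulN1r !sqrrN. Qed.

Lemma Pi_par beta rho x : Pi beta rho (par x) = Pi beta rho x.
Proof. by rewrite /Pi rad_par /tim !mxE /sgn /= mul1r. Qed.

Lemma eta_sgn (a : 'I_3) (mu nu : 'I_4) :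
  eta R a mu nu * sgn R nu = sgn R mu * etabar R a mu nu.
Proof.
case: a => [[|[|[|k]]] Ha] //; case: mu => [[|[|[|[|m]]]] Hm] //;
  case: nu => [[|[|[|[|n]]]] Hn] //;
  rewrite /eta /etabar /epsS /leviCivita /kdelta /sgn /=; ring.
Qed.

End Parity.

Local Open Scope complex_scope.

Section GaugeFieldParity.
Variables (R : realType) (beta rho : R).

Lemma Acomp_par (a : 'I_3) (mu : 'I_4) :
  Acomp true beta rho a mu = (fun x => sgn R mu * Acomp false beta rho a mu (par x)).
Proof.
apply: funext => x; rewrite /Acomp /thooft mulr_sumr; apply: eq_bigr => nu _.
have lnPi_par : (fun y => ln (Pi beta rho y)) = (fun y => ln (Pi beta rho y)) \o par.
  by apply: funext => y; rewrite /= Pi_par.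
by rewrite [in LHS]lnPi_par partial_comp_par mulrA eta_sgn mulrA.
Qed.

Lemma partial_Acomp_par (a : 'I_3) (mu nu : 'I_4) (x : 'rV[R]_4) :
  partial mu (Acomp true beta rho a nu) x =
  sgn R nu * sgn R mu * partial mu (Acomp false beta rho a nu) (par x).
Proof.
rewrite Acomp_par {1}/partial derive_signf -mulrA.
by rewrite -(partial_comp_par _ mu (Acomp false beta rho a nu)).
Qed.

Lemma Agauge_par (mu : 'I_4) (x : 'rV[R]_4) :
  Agauge true beta rho mu x = (sgn R mu)%:C *: Agauge false beta rho mu (par x).
Proof.
rewrite /Agauge scaler_sumr; apply: eq_bigr => a _.
by rewrite Acomp_par rmorphM scalerA.
Qed.

Lemma curvature_scale n k (T : 'I_k -> 'M[R[i]]_n) (P P' : 'I_k -> R)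
    (A B A' B' : 'M[R[i]]_n) (s1 s2 : R) :
  (forall a, P a = s1 * s2 * P' a) -> A = s1%:C *: A' -> B = s2%:C *: B' ->
  \sum_a (P a)%:C *: T a - imagC R *: (A *m B - B *m A) =
  (s1 * s2)%:C *: (\sum_a (P' a)%:C *: T a - imagC R *: (A' *m B' - B' *m A')).
Proof.
move=> PP' -> ->; rewrite [RHS]scalerBr [in RHS]scaler_sumr.
under eq_bigr => a _ do rewrite PP' rmorphM -scalerA.
rewrite -!scalemxAl -!scalemxAr !scalerA -!rmorphM (mulrC s2 s1) -scalerBr !scalerA.
by rewrite [imagC R * _]mulrC.
Qed.

Lemma Fstrength_par (mu nu : 'I_4) (x : 'rV[R]_4) :
  Fstrength true beta rho mu nu x =
  (sgn R mu * sgn R nu)%:C *: Fstrength false beta rho mu nu (par x).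
Proof.
apply: curvature_scale => [a||]; last 2 first; [exact: Agauge_par..|].
by rewrite !partial_Acomp_par mulrBr [sgn R nu * _]mulrC.
Qed.

Lemma transport_generator_par (y z : 'rV[R]_4) (s : R) :
  \sum_mu ((z - y) 0 mu)%:C *: Agauge true beta rho mu (y + s *: (z - y)) =
  \sum_mu ((par z - par y) 0 mu)%:C *:
     Agauge false beta rho mu (par y + s *: (par z - par y)).
Proof.
apply: eq_bigr => mu _; rewrite Agauge_par scalerA -rmorphM.
have -> : par (y + s *: (z - y)) = par y + s *: (par z - par y).
  by apply/rowP => i; rewrite !mxE; ring.
rewrite !mxE; congr (_ *: _); congr (_%:C); by rewrite mulrC mulrBr.
Qed.

Lemma wilson_sol_par (y z : 'rV[R]_4) (W : R -> 'M[R[i]]_2) :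
  wilson_sol true beta rho y z W -> wilson_sol false beta rho (par y) (par z) W.
Proof.
move=> [W0 dW]; split; first exact: W0.
by move=> s s01; rewrite -(transport_generator_par y z s); exact: dW.
Qed.

End GaugeFieldParity.

Local Notation Re := complex.Re.
Local Notation Im := complex.Im.

Definition herm (R : realType) n (H : 'M[R[i]]_n) : Prop :=
  forall i j, Re (H i j) = Re (H j i) /\ Im (H i j) = - Im (H j i).
Arguments herm {R n} H.

Definition mx_dot (R : realType) n (D E : 'M[R[i]]_n) : R :=
  \sum_i \sum_j (Re (D i j) * Re (E i j) + Im (D i j) * Im (E i j)).
Arguments mx_dot {R n} D E.

Section HermitianTransport.
Variable R : realType.

Lemma ReM (x y : R[i]) : Re (x * y) = Re x * Re y - Im x * Im y.
Proof. by case: x => a b; case: y. Qed.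

Lemma ImM (x y : R[i]) : Im (x * y) = Re x * Im y + Im x * Re y.
Proof. by case: x => a b; case: y. Qed.

Lemma ReB (x y : R[i]) : Re (x - y) = Re x - Re y.
Proof. exact: raddfB. Qed.

Lemma ImB (x y : R[i]) : Im (x - y) = Im x - Im y.
Proof. exact: raddfB. Qed.

Lemma big_ord2 (V : nmodType) (F : 'I_2 -> V) : \sum_(i < 2) F i = F 0 + F 1.
Proof. by rewrite big_ord_recl big_ord1; congr (_ + F _); apply: val_inj. Qed.

Lemma hermD n (A B : 'M[R[i]]_n) : herm A -> herm B -> herm (A + B).
Proof.
move=> hA hB i j; have [reA imA] := hA i j; have [reB imB] := hB i j.
by rewrite !mxE !raddfD /= reA imA reB imB.
Qed.

Lemma hermZ n (k : R) (A : 'M[R[i]]_n) : herm A -> herm (k%:C *: A).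
Proof.
move=> hA i j; have [reA imA] := hA i j.
by rewrite !mxE !ReM !ImM /= reA imA !mul0r !subr0 !addr0 mulrN.
Qed.

Lemma herm_sum n m (F : 'I_m -> 'M[R[i]]_n) : (forall k, herm (F k)) -> herm (\sum_k F k).
Proof.
move=> hF; elim/big_ind: _ => //; last exact: hermD.
by move=> i j; rewrite !mxE /= oppr0.
Qed.

Lemma herm_tgen (a : 'I_3) : herm (tgen R a).
Proof.
rewrite /tgen; have -> : (2%:R : R[i])^-1 = (2^-1 : R)%:C by rewrite fmorphV rmorph_nat.
apply: hermZ => i j; rewrite !mxE.
by case: a => [[|[|[|//]]] ?]; case: i => [[|[|//]] ?]; case: j => [[|[|//]] ?];
  rewrite /= ?oppr0 ?opprK.
Qed.

Lemma mx_dot_eq0 n (D : 'M[R[i]]_n) : mx_dot D D = 0 -> D = 0.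
Proof.
move=> D0; apply/matrixP => i j; rewrite mxE.
have sq_ge0 (x : R) : 0 <= x * x by rewrite -expr2 sqr_ge0.
have term_ge0 k l : 0 <= Re (D k l) * Re (D k l) + Im (D k l) * Im (D k l).
  by rewrite addr_ge0.
have row_i := psumr_eq0P (fun k _ => sumr_ge0 _ (fun l _ => term_ge0 k l)) D0 (i := i) isT.
move: (psumr_eq0P (fun l _ => term_ge0 i l) row_i (i := j) isT) => /eqP.
rewrite paddr_eq0 ?sq_ge0 // !mulf_eq0 !orbb => /andP[/eqP Re0 /eqP Im0].
by case: (D i j) Re0 Im0 => a b /= -> ->.
Qed.

Lemma is_derive_sum_fun n (F : 'I_n -> R -> R) (dF : 'I_n -> R) (s : R) :
  (forall i, is_derive s 1 (F i) (dF i)) ->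
  is_derive s 1 (fun t => \sum_i F i t) (\sum_i dF i).
Proof. by move=> dF_; rewrite -fct_sumE; exact: is_derive_sum. Qed.

Lemma is_derive_mx_dot {D : R -> 'M[R[i]]_2} {E : 'M[R[i]]_2} {s : R} :
  has_mx_derive D s E ->
  is_derive s 1 (fun t => mx_dot (D t) (D t)) (2 * mx_dot (D s) E).
Proof.
move=> dD; rewrite /mx_dot mulr_sumr; apply: is_derive_sum_fun => i.
rewrite mulr_sumr; apply: is_derive_sum_fun => j; have [dRe dIm] := dD i j.
apply: is_derive_eq (is_deriveD (is_deriveM dRe dRe) (is_deriveM dIm dIm)) _.
by rewrite /GRing.scale /=; ring.
Qed.

Lemma has_mx_deriveB {W1 W2 : R -> 'M[R[i]]_2} {E1 E2 : 'M[R[i]]_2} {s : R} :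
  has_mx_derive W1 s E1 -> has_mx_derive W2 s E2 ->
  has_mx_derive (fun t => W1 t - W2 t) s (E1 - E2).
Proof.
move=> dW1 dW2 i j; have [dRe1 dIm1] := dW1 i j; have [dRe2 dIm2] := dW2 i j.
rewrite !mxE ReB ImB; split; under eq_fun do rewrite !mxE ?ReB ?ImB; exact: is_deriveB.
Qed.

Lemma mx_dot_herm_mul (H D : 'M[R[i]]_2) : herm H -> mx_dot D ((imagC R *: H) *m D) = 0.
Proof.
move=> hH; have [_ Im00] := hH 0 0; have [_ Im11] := hH 1 1; have [Re10 Im10] := hH 1 0.
have Im00_0 : Im (H 0 0) = 0 by lra.
have Im11_0 : Im (H 1 1) = 0 by lra.
rewrite /mx_dot !big_ord2 !mxE !big_ord2 !mxE !raddfD /= !(ReM, ImM) /=.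
rewrite Re10 Im10 Im00_0 Im11_0; ring.
Qed.

Lemma is_derive0_segment_cst {f : R -> R} {a b : R} : a <= b ->
  (forall s, a <= s <= b -> is_derive s 1 f 0) -> f b = f a.
Proof.
move=> ab df; apply/eqP; rewrite -subr_eq0; apply/eqP.
have [c _ ->] : exists2 c, c \in `[a, b]%R & f b - f a = (fun=> 0) c * (b - a).
  apply: MVT_segment ab _ _.
    by move=> s; rewrite in_itv /= => /andP[a_s s_b]; apply: df; rewrite !ltW.
  apply: derivable_within_continuous => s; rewrite in_itv /= => s_ab.
  by have [] := df s s_ab.
by rewrite mul0r.
Qed.

Lemma transport_unique (H W1 W2 : R -> 'M[R[i]]_2) :
  (forall s, herm (H s)) -> W1 0 = W2 0 ->
  (forall s, 0 <= s <= 1 -> has_mx_derive W1 s ((imagC R *: H s) *m W1 s)) ->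
  (forall s, 0 <= s <= 1 -> has_mx_derive W2 s ((imagC R *: H s) *m W2 s)) ->
  W1 1 = W2 1.
Proof.
move=> hH W0 dW1 dW2; apply/eqP; rewrite -subr_eq0; apply/eqP/mx_dot_eq0.
pose D t := W1 t - W2 t.
have dD (s : R) : 0 <= s <= 1 -> is_derive s 1 (fun t => mx_dot (D t) (D t)) 0.
  move=> s01; have dDs := has_mx_deriveB (dW1 s s01) (dW2 s s01).
  apply: is_derive_eq (is_derive_mx_dot dDs) _.
  by rewrite -mulmxBr mx_dot_herm_mul ?mulr0.
rewrite -/(D 1) (is_derive0_segment_cst ler01 dD) /D W0 subrr.
by rewrite /mx_dot big1 // => i _; rewrite big1 // => j _; rewrite mxE /= mulr0 addr0.
Qed.

Lemma wilson_sol_unique {anti} {beta rho : R} {y z : 'rV[R]_4} {W1 W2 : R -> 'M[R[i]]_2} :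
  wilson_sol anti beta rho y z W1 -> wilson_sol anti beta rho y z W2 -> W1 1 = W2 1.
Proof.
move=> [W10 dW1] [W20 dW2]; apply: transport_unique dW1 dW2; last by rewrite W10 W20.
move=> s; apply: herm_sum => mu; apply: hermZ.
by apply: herm_sum => a; apply: hermZ; exact: herm_tgen.
Qed.

End HermitianTransport.

Lemma mulmx_scaled_pair (R : realType) n {k : R} {F0 F0' F1 F1' : 'M[R[i]]_n}
    (W1 W2 : 'M[R[i]]_n) :
  k ^+ 2 = 1 -> F0 = k%:C *: F0' -> F1 = k%:C *: F1' ->
  F0 *m W1 *m F1 *m W2 = F0' *m W1 *m F1' *m W2.
Proof.
move=> k2 -> ->.
by rewrite -!scalemxAl -scalemxAr -!scalemxAl !scalerA -rmorphM -expr2 k2 scale1r.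
Qed.

Local Close Scope classical_set_scope.
Local Close Scope complex_scope.

Theorem proposition4 (R : realType) (beta rho : R) (hbeta : 0 < beta) (hrho : 0 <= rho)
  (tau : R) (x : 'rV[R]_3)
  (hdef : rho = 0 \/ cos (2 * pi * tau / beta) != 1)
  (WA1 WA2 WC1 WC2 : R -> 'M[R[i]]_2) :
  wilson_sol true beta rho (pt tau 0) (pt tau x) WA1 ->
  wilson_sol true beta rho (pt tau x) (pt tau 0) WA2 ->
  wilson_sol false beta rho (pt tau 0) (pt tau (- x)) WC1 ->
  wilson_sol false beta rho (pt tau (- x)) (pt tau 0) WC2 ->
  forall a : 'I_3,
    Iintegrand true beta rho tau x WA1 WA2 a =
    Iintegrand false beta rho tau (- x) WC1 WC2 a.
Proof.
move=> hA1 hA2 hC1 hC2 a.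
have E1 : WA1 1 = WC1 1.
  move/wilson_sol_par: hA1; rewrite !par_pt oppr0 => hA1.
  exact: wilson_sol_unique hA1 hC1.
have E2 : WA2 1 = WC2 1.
  move/wilson_sol_par: hA2; rewrite !par_pt oppr0 => hA2.
  exact: wilson_sol_unique hA2 hC2.
rewrite /Iintegrand E1 E2; apply: (congr1 (fun S => \tr (tgen R a *m S))).
apply: eq_bigr => mu _; apply: eq_bigr => nu _.
have F0 := Fstrength_par R beta rho mu nu (pt tau 0).
have F1 := Fstrength_par R beta rho mu nu (pt tau x).
rewrite par_pt oppr0 in F0; rewrite par_pt in F1.
exact: mulmx_scaled_pair (sgn_mul_sqr R mu nu) F0 F1.
Qed.
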